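(* Let $G$ be a topological group, $A$ a topological $G$-module and $f\in C_c^n(G,A)$ a continuous homogeneous group $n$-cocycle (i.e. $df=0$). Then $j_v^n(f)$ and $j_h^n(i^n(f))$ are cohomologous in $\mathrm{Tot}\,A_{lc}^{*,*}(G,A)^G$, where $i^n\colon C_c^n(G,A)\hookrightarrow C_{lc}^n(G,A)$ is the inclusion.
   Context: A topological $G$-module is an abelian topological group $A$ with an action of $G$ by group automorphisms such that $G\times A\to A$ is continuous. For an identity neighbourhood $U$ of $G$ put $\Gamma_U^0:=G$ and, for $q\ge1$, $\Gamma_U^q:=\{(g_0,\dots,g_q)\in G^{q+1}\mid g_i^{-1}g_j\in U\ \forall i,j\}$. $G$ acts on maps $f\colon G^{n+1}\to A$ by $(g.f)(g_0,\dots,g_n)=g.f(g^{-1}g_0,\dots,g^{-1}g_n)$, and $df(g_0,\dots,g_{n+1})=\sum_i(-1)^if(g_0,\dots,\widehat{g_i},\dots,g_{n+1})$. $C_c^n(G,A)$ consists of continuous equivariant maps $G^{n+1}\to A$; $C_{lc}^n(G,A)$ of equivariant maps whose restriction to $\Gamma_U^n$ is continuous for some identity neighbourhood $U$. $A_{lc}^{p,q}(G,A)$ is the group of maps $f\colon G^{p+1}\times G^{q+1}\to A$ whose restriction to $G^{p+1}\times\Gamma_U^q$ is continuous for some identity neighbourhood $U$, with $d_hf(x_0,\dots,x_{p+1},\vec y)=\sum_i(-1)^if(x_0,\dots,\widehat{x_i},\dots,x_{p+1},\vec y)$ and $d_vf(\vec x,y_0,\dots,y_{q+1})=(-1)^p\sum_i(-1)^if(\vec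 x,y_0,\dots,\widehat{y_i},\dots,y_{q+1})$. $G$ acts by $(g.f)(\vec x,\vec y)=g.f(g^{-1}\vec x,g^{-1}\vec y)$, and $\mathrm{Tot}\,A_{lc}^{*,*}(G,A)^G$ is the total complex of the fixed-point double complex, $\mathrm{Tot}^n=\bigoplus_{p+q=n}A_{lc}^{p,q}(G,A)^G$ with differential $d_h+d_v$. The maps $j_h^n\colon C_{lc}^n(G,A)\to A_{lc}^{0,n}(G,A)^G$, $j_h(f)(x_0,\vec y)=f(\vec y)$, and $j_v^n\colon C_c^n(G,A)\to A_{lc}^{n,0}(G,A)^G$, $j_v(f)(\vec x,y_0)=f(\vec x)$, are chain maps into the total complex. *)

From HB Require Import structures.
From mathcomp Require Import all_boot all_order all_algebra.
From mathcomp Require Import all_classical all_reals topology tvs.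
Set Implicit Arguments. Unset Strict Implicit. Unset Printing Implicit Defensive.
Import GRing.Theory.
Local Open Scope classical_set_scope.
Local Open Scope ring_scope.

Definition is_topological_group (G : topologicalType)
  (mul : G -> G -> G) (inv : G -> G) (one : G) : Prop :=
  [/\ (forall x y z, mul x (mul y z) = mul (mul x y) z),
      (forall x, mul one x = x /\ mul x one = x),
      (forall x, mul (inv x) x = one /\ mul x (inv x) = one),
      continuous (fun xy : G * G => mul xy.1 xy.2)
    & continuous inv].

Definition is_topological_Gmodule (G : topologicalType)
  (mul : G -> G -> G) (one : G) (A : topologicalZmodType) (act : G -> A -> A)
  : Prop :=
  [/\ (forall g a b, act g (a + b) = act g a + act g b),
      (forall a, act one a = a),
      (forall g h a, act (mul g h) a = act g (act h a))
    & continuous (fun ga : G * A => act ga.1 ga.2)].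

Section Cochains.
Variables (G : topologicalType) (mul : G -> G -> G) (inv : G -> G) (one : G).
Variables (A : topologicalZmodType) (act : G -> A -> A).

Local Notation Gp n := {ptws 'I_n -> G}.

Definition sgnv (i : nat) (v : A) : A := if odd i then - v else v.

Definition face n (i : 'I_n.+2) (x : 'I_n.+2 -> G) : 'I_n.+1 -> G :=
  fun j => x (lift i j).

Definition ltr n (g : G) (x : 'I_n -> G) : 'I_n -> G := fun i => mul (inv g) (x i).

Definition dC n (f : ('I_n.+1 -> G) -> A) : ('I_n.+2 -> G) -> A :=
  fun x => \sum_(i < n.+2) sgnv i (f (face i x)).

Definition equivariant n (f : ('I_n -> G) -> A) : Prop :=
  forall g x, act g (f (ltr g x)) = f x.

Definition Cc n (f : ('I_n.+1 -> G) -> A) : Prop :=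
  continuous (f : Gp n.+1 -> A) /\ equivariant f.

Definition GammaU (U : set G) q : set ('I_q.+1 -> G) :=
  [set y | q = 0%N \/ forall i j, U (mul (inv (y i)) (y j))].

Definition dcochain p q := ('I_p.+1 -> G) -> ('I_q.+1 -> G) -> A.

Definition Alc p q (f : dcochain p q) : Prop :=
  exists U : set G, nbhs one U /\
    {within [set xy : Gp p.+1 * Gp q.+1 | GammaU U xy.2],
       continuous (fun xy => f xy.1 xy.2)}.

Definition dinvariant p q (f : dcochain p q) : Prop :=
  forall g x y, act g (f (ltr g x) (ltr g y)) = f x y.

Definition AlcG p q (f : dcochain p q) : Prop := Alc f /\ dinvariant f.

Definition d_h p q (f : dcochain p q) : dcochain p.+1 q :=
  fun x y => \sum_(i < p.+2) sgnv i (f (face i x) y).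

Definition d_v p q (f : dcochain p q) : dcochain p q.+1 :=
  fun x y => sgnv p (\sum_(i < q.+2) sgnv i (f x (face i y))).

(* components of j_v^n(f) and j_h^n(f) in bidegree (p,q) of Tot^n
   (zero outside bidegree (n,0), resp. (0,n)) *)
Definition jv n (f : ('I_n.+1 -> G) -> A) p q : dcochain p q :=
  fun x y => if (p == n) && (q == 0%N) then f (fun i => x (inord i)) else 0.

Definition jh n (f : ('I_n.+1 -> G) -> A) p q : dcochain p q :=
  fun x y => if (p == 0%N) && (q == n) then f (fun i => y (inord i)) else 0.

Definition totd (b : forall p q, dcochain p q) p q : dcochain p q :=
  fun x y =>
    (match p as p0 return dcochain p0 q with
     | 0%N => fun _ _ => 0
     | p'.+1 => d_h (b p' q) end) x y +
    (match q as q0 return dcochain p q0 with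
     | 0%N => fun _ _ => 0
     | q'.+1 => d_v (b p q') end) x y.

Definition tot_cohomologous n (c1 c2 : forall p q, dcochain p q) : Prop :=
  exists b : forall p q, dcochain p q,
    (forall p q, (p + q).+1 = n -> AlcG (b p q)) /\
    (forall p q, p + q = n -> forall x y,
        c1 p q x y - c2 p q x y = totd b x y).

End Cochains.

From HB Require Import structures.
From mathcomp Require Import all_boot all_order all_algebra.
From mathcomp Require Import all_classical all_reals topology tvs.
From mathcomp Require Import zify.
From Stdlib Require Import Lia.
Local Open Scope classical_set_scope.
Local Open Scope ring_scope.
Import GRing.Theory.
Set Implicit Arguments. Unset Strict Implicit.

(** The homotopy is b_{p,q}(x, y) = (-1)^(p+1) f(x_0,...,x_p,y_0,...,y_q)
   for p + q + 1 = n.  Faces of (x, y) in the x-block give d_h b, faces in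
   the y-block give d_v b, and on the concatenated point z = (x, y) the
   cocycle identity (df)(z) = 0 says exactly that the alternating sum of the
   x-block faces of f equals, up to the sign (-1)^p, that of the y-block
   faces.  In each bidegree of Tot^n this is the identity
   (j_v f - j_h f)_{p,q} = (D b)_{p,q}; in the extreme bidegrees (n,0) and
   (0,n), j_v f and j_h f stand in for the missing d_v and d_h terms.  Since
   f is continuous and equivariant, so is every b_{p,q}, on all of
   G^{p+1} x G^{q+1}. *)

Section Signs.
Variable A : topologicalZmodType.

Lemma sgnvS k (v : A) : sgnv k.+1 v = - sgnv k v.
Proof. by rewrite /sgnv /=; case: (odd k); rewrite ?opprK. Qed.

Lemma sgnvN k (v : A) : sgnv k (- v) = - sgnv k v.
Proof. by rewrite /sgnv; case: (odd k). Qed.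

Lemma sgnvD a b (v : A) : sgnv (a + b) v = sgnv a (sgnv b v).
Proof. by elim: a => [|a IH] //; rewrite addSn !sgnvS IH. Qed.

Lemma sgnvC a b (v : A) : sgnv a (sgnv b v) = sgnv b (sgnv a v).
Proof. by rewrite -!sgnvD addnC. Qed.

Lemma sgnvK k : involutive (@sgnv A k).
Proof. by move=> v; rewrite /sgnv; case: (odd k); rewrite ?opprK. Qed.

Lemma sgnv_sum k m (F : nat -> A) :
  sgnv k (\sum_(0 <= i < m) F i) = \sum_(0 <= i < m) sgnv k (F i).
Proof. by rewrite /sgnv; case: (odd k); rewrite ?sumrN. Qed.

Lemma continuous_sgnv k : continuous (@sgnv A k).
Proof.
rewrite /sgnv; case: (odd k); first exact: opp_continuous.
by move=> x.
Qed.

Section AdditiveMaps.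
Variables (h : A -> A) (hD : {morph h : u v / u + v}).

Lemma morphD0 : h 0 = 0.
Proof. by apply: (addrI (h 0)); rewrite -hD !addr0. Qed.

Lemma morphD_sgnv k v : h (sgnv k v) = sgnv k (h v).
Proof.
have hN u : h (- u) = - h u.
  by apply/eqP; rewrite -subr_eq0 opprK -hD addNr morphD0.
by rewrite /sgnv; case: (odd k).
Qed.

End AdditiveMaps.

End Signs.

Section Homotopy.
Variables (G : topologicalType) (A : topologicalZmodType).

Definition catG p q (x : 'I_p.+1 -> G) (y : 'I_q.+1 -> G) : nat -> G :=
  fun k => if (k < p.+1)%N then x (inord k) else y (inord (k - p.+1)).

Lemma catG_face_l p q (x : 'I_p.+2 -> G) (y : 'I_q.+1 -> G) (i : 'I_p.+2) k :
  catG (face i x) y k = catG x y (bump i k).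
Proof.
have hi := ltn_ord i; rewrite /catG /face /bump.
case: ltnP => hk.
  have -> : ((i <= k) + k < p.+2)%N.
    by case: (i <= k)%N; rewrite /= ?add0n ?add1n; lia.
  congr x; apply: val_inj; rewrite /= inordK //= inordK //.
  by case: (i <= k)%N; rewrite /= ?add0n ?add1n; lia.
have -> : (i <= k)%N by lia.
have -> : (true + k < p.+2)%N = false by rewrite /= add1n; lia.
by congr y; apply: val_inj; rewrite /= add1n.
Qed.

Lemma catG_face_r p q (x : 'I_p.+1 -> G) (y : 'I_q.+2 -> G) (i : 'I_q.+2) k :
  (k < p.+1 + q.+1)%N -> catG x (face i y) k = catG x y (bump (p.+1 + i) k).
Proof.
have hi := ltn_ord i; rewrite /catG /face /bump => hkn.
case: ltnP => hk.
  have -> : (p.+1 + i <= k)%N = false by lia.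
  by rewrite add0n hk.
have -> : ((p.+1 + i <= k) + k < p.+1)%N = false.
  by case: (p.+1 + i <= k)%N; rewrite /= ?add0n ?add1n; lia.
congr y; apply: val_inj; rewrite /= inordK; last by lia.
rewrite inordK /bump; last by case: (p.+1 + i <= k)%N; case: (i <= k - p.+1)%N;
  rewrite /= ?add0n ?add1n; lia.
by have [h1|h1] := leqP (p.+1 + i) k; have [h2|h2] := leqP i (k - p.+1);
  rewrite /= ?add0n ?add1n; lia.
Qed.

Section FaceSums.
Variables (n : nat) (f : ('I_n.+1 -> G) -> A).

Definition face_sum_lo p (z : nat -> G) : A :=
  \sum_(0 <= i < p.+1) sgnv i (f (fun k : 'I_n.+1 => z (bump i k))).

Definition face_sum_hi p q (z : nat -> G) : A :=
  \sum_(0 <= i < q.+1) sgnv i (f (fun k : 'I_n.+1 => z (bump (p.+1 + i) k))).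

Lemma cocycle_face_sums p q z : (forall x, dC f x = 0) -> p + q = n ->
  sgnv p (face_sum_lo p z) = face_sum_hi p q z.
Proof.
move=> cocycle_f epq.
have : \sum_(0 <= i < n.+2) sgnv i (f (fun k : 'I_n.+1 => z (bump i k))) = 0.
  by rewrite big_mkord; have := cocycle_f (fun i : 'I_n.+2 => z i).
rewrite (@big_cat_nat _ _ _ p.+1) //=; last by lia.
rewrite -{2}(add0n p.+1) big_addn.
have -> : (n.+2 - p.+1 = q.+1)%N by lia.
have -> : \sum_(0 <= i < q.+1) sgnv (i + p.+1)
     (f (fun k : 'I_n.+1 => z (bump (i + p.+1) k)))
   = sgnv p.+1 (face_sum_hi p q z).
  by rewrite sgnv_sum; apply: eq_bigr => i _; rewrite addnC sgnvD.
move/eqP; rewrite addr_eq0 sgnvS opprK => /eqP lo_eq.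
by rewrite /face_sum_lo lo_eq sgnvK.
Qed.

Definition homotopy p q : dcochain G A p q := fun x y =>
  if (p + q).+1 == n then sgnv p.+1 (f (fun i : 'I_n.+1 => catG x y i)) else 0.
Arguments homotopy : clear implicits.

Lemma d_h_homotopy p q x y : p.+1 + q = n ->
  d_h (homotopy p q) x y = sgnv p.+1 (face_sum_lo p.+1 (catG x y)).
Proof.
move=> epq; rewrite /d_h /homotopy (_ : (p + q).+1 == n); last by rewrite -epq.
rewrite /face_sum_lo sgnv_sum big_mkord; apply: eq_bigr => i _ /=.
rewrite sgnvC; congr (sgnv _ (sgnv _ (f _))); apply: funext => k.
exact: catG_face_l.
Qed.

Lemma d_v_homotopy p q x y : p + q.+1 = n ->
  d_v (homotopy p q) x y = - face_sum_hi p q.+1 (catG x y).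
Proof.
move=> epq; rewrite /d_v /homotopy (_ : (p + q).+1 == n); last first.
  by apply/eqP; lia.
rewrite (_ : \sum_(i < q.+2) _ = sgnv p.+1 (face_sum_hi p q.+1 (catG x y))).
  by rewrite sgnvS sgnvN sgnvK.
rewrite /face_sum_hi sgnv_sum big_mkord; apply: eq_bigr => i _ /=.
rewrite sgnvC; congr (sgnv _ (sgnv _ (f _))); apply: funext => k.
by apply: catG_face_r; have := ltn_ord k; lia.
Qed.

End FaceSums.

Definition totd_h (b : forall p q, dcochain G A p q) p q : dcochain G A p q :=
  match p as p0 return dcochain G A p0 q with
  | 0%N => fun _ _ => 0
  | p'.+1 => d_h (b p' q) end.

Definition totd_v (b : forall p q, dcochain G A p q) p q : dcochain G A p q :=
  match q as q0 return dcochain G A p q0 with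
  | 0%N => fun _ _ => 0
  | q'.+1 => d_v (b p q') end.

Lemma totdE b p q (x : 'I_p.+1 -> G) (y : 'I_q.+1 -> G) :
  totd b x y = totd_h b x y + totd_v b x y.
Proof. by []. Qed.

Section Components.
Variables (n : nat) (f : ('I_n.+1 -> G) -> A).

Lemma jv_sub_totd_v p q (x : 'I_p.+1 -> G) (y : 'I_q.+1 -> G) : p + q = n ->
  jv f x y - totd_v (homotopy f) x y = face_sum_hi f p q (catG x y).
Proof.
case: q y => [|q] y epq; last by rewrite /jv andbF sub0r /= d_v_homotopy ?opprK.
rewrite /jv (_ : (p == n) && (0 == 0)%N); last by rewrite andbT; apply/eqP; lia.
rewrite subr0 /face_sum_hi big_nat1; congr f; apply: funext => k.
have hk : (k < p.+1)%N by have := ltn_ord k; lia.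
rewrite /catG /bump (_ : (p.+1 + 0 <= k)%N = false); last by lia.
by rewrite add0n hk.
Qed.

Lemma jh_add_totd_h p q (x : 'I_p.+1 -> G) (y : 'I_q.+1 -> G) : p + q = n ->
  jh f x y + totd_h (homotopy f) x y = sgnv p (face_sum_lo f p (catG x y)).
Proof.
case: p x => [|p] x epq; last by rewrite /jh /= add0r d_h_homotopy.
rewrite /jh (_ : (0 == 0)%N && (q == n)); last by apply/eqP; lia.
rewrite addr0 /face_sum_lo big_nat1; congr f; apply: funext => k.
by rewrite /catG /bump leq0n add1n ltnS /= subSS subn0.
Qed.

Lemma jv_sub_jh_totd p q (x : 'I_p.+1 -> G) (y : 'I_q.+1 -> G) :
  (forall z, dC f z = 0) -> p + q = n ->
  jv f x y - jh f x y = totd (homotopy f) x y.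
Proof.
move=> cocycle_f epq; rewrite totdE.
rewrite -[jv f x y](subrK (totd_v (homotopy f) x y)) jv_sub_totd_v //.
rewrite -(cocycle_face_sums _ cocycle_f epq) -jh_add_totd_h //.
by rewrite addrC -!addrA addKr.
Qed.

End Components.
End Homotopy.

Lemma continuous_ptws (X : topologicalType) (I : Type) (G : topologicalType)
  (h : X -> {ptws I -> G}) :
  (forall i, continuous (fun x => h x i)) -> continuous h.
Proof.
move=> h_cont x; apply/cvg_sup => i; move: x.
apply/(@continuousP _ (initial_topology (fun g : I -> G => g i))).
move=> _ [B oB <-].
exact: (open_comp (fun x _ => h_cont i x)).
Qed.

Section Regularity.
Variables (G : topologicalType) (A : topologicalZmodType).
Local Notation Gp n := {ptws 'I_n -> G}.

Lemma continuous_catG p q n :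
  continuous (fun xy : Gp p.+1 * Gp q.+1 =>
    (fun i : 'I_n.+1 => catG xy.1 xy.2 i) : Gp n.+1).
Proof.
apply: continuous_ptws => i; rewrite /catG; case: (_ < _)%N => xy.
  apply: (@continuous_comp _ _ _ fst (fun g : Gp p.+1 => g (inord i)) xy).
    exact: cvg_fst.
  exact: (@proj_continuous _ (fun _ => G) (inord i)).
apply: (@continuous_comp _ _ _ snd
  (fun g : Gp q.+1 => g (inord (i - p.+1))) xy).
  exact: cvg_snd.
exact: (@proj_continuous _ (fun _ => G) (inord (i - p.+1))).
Qed.

Variables (n : nat) (f : ('I_n.+1 -> G) -> A).

Lemma continuous_homotopy p q : continuous (f : Gp n.+1 -> A) ->
  continuous (fun xy : Gp p.+1 * Gp q.+1 => homotopy f xy.1 xy.2).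
Proof.
move=> f_cont xy; rewrite /homotopy; case: eqP => _; last exact: cst_continuous.
apply: (continuous_comp (f := fun xy : Gp p.+1 * Gp q.+1 =>
  f (fun i : 'I_n.+1 => catG xy.1 xy.2 i))); last exact: continuous_sgnv.
by apply: (continuous_comp (@continuous_catG p q n xy)); exact: f_cont.
Qed.

Lemma Alc_homotopy (mul : G -> G -> G) (inv : G -> G) (one : G) p q :
  continuous (f : Gp n.+1 -> A) -> Alc mul inv one (@homotopy _ _ _ f p q).
Proof.
move=> f_cont; exists setT; split; first exact: filterT.
exact/continuous_subspaceT/continuous_homotopy.
Qed.

Lemma dinvariant_homotopy (mul : G -> G -> G) (inv : G -> G)
  (act : G -> A -> A) p q :
  (forall g, {morph act g : u v / u + v}) -> equivariant mul inv act f ->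
  dinvariant mul inv act (@homotopy _ _ _ f p q).
Proof.
move=> actD f_eq g x y; rewrite /homotopy; case: eqP => _.
  rewrite (morphD_sgnv (actD g)); congr sgnv; rewrite -[RHS](f_eq g).
  by congr (act g (f _)); apply: funext => i; rewrite /catG /ltr; case: ifP.
exact: (morphD0 (actD g)).
Qed.

End Regularity.

Theorem mainTheorem4 (G : topologicalType) (mul : G -> G -> G) (inv : G -> G)
  (one : G) (A : topologicalZmodType) (act : G -> A -> A) (n : nat)
  (f : ('I_n.+1 -> G) -> A) :
  is_topological_group mul inv one ->
  is_topological_Gmodule mul one act ->
  Cc mul inv act f ->
  (forall x, dC f x = 0) ->
  tot_cohomologous mul inv one act n (jv f) (jh f).
Proof.
move=> _ [actD _ _ _] [f_cont f_eq] cocycle_f.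
exists (homotopy f); split => [p q _ | p q epq x y]; last exact: jv_sub_jh_totd.
by split; [exact: Alc_homotopy | exact: dinvariant_homotopy].
Qed.
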